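(* Let $\rho$ be a state on $\mathcal H_{AB}$ and let $\mathcal F$ be a convex set of states on $\mathcal H_{AB}$. Then for every $\epsilon>0$, $\gamma^{\epsilon}_{\mathcal F}(\rho)\ge 2^{D^{\epsilon}_{\max}(\rho\|\mathcal F)}$.
   Context: $\log$ base 2. $B_\epsilon(\rho)=\{\tau\text{ a state on }\mathcal H_{AB}: d(\tau,\rho)\le\epsilon\}$ with $d$ the trace-norm induced distance. The smoothed $\gamma$-factor is $\gamma^{\epsilon}_{\mathcal F}(\rho)=\inf\{c_1+c_2:\ \sigma=c_1\sigma_1-c_2\sigma_2,\ c_1,c_2\ge0,\ \sigma_1,\sigma_2\in\mathcal F,\ \sigma\in B_\epsilon(\rho)\}$. The smoothed max-relative entropy with respect to $\mathcal F$ is $D^{\epsilon}_{\max}(\rho\|\mathcal F)=\min_{\tau\in B_\epsilon(\rho)}\inf_{\sigma\in\mathcal F}\inf\{\lambda\in\mathbb R:\tau\le2^{\lambda}\sigma\}$. *)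

From HB Require Import structures.
From mathcomp Require Import all_boot all_order all_algebra.
From mathcomp.real_closed Require Import complex.
From mathcomp Require Import all_classical all_reals.
From mathcomp Require Import ereal exp.

Set Implicit Arguments.
Unset Strict Implicit.
Unset Printing Implicit Defensive.

Import Order.TTheory GRing.Theory Num.Theory.
Local Open Scope ring_scope.
Local Open Scope classical_set_scope.
Local Notation "x %:C" := (real_complex _ x) (format "x %:C").

Section QDefs.
Variable R : realType.
Local Notation C := (complex R).

Definition adjmx m n (A : 'M[C]_(m, n)) : 'M[C]_(n, m) :=
  map_mx (@conjc R) A^T.

Definition hermitian n (A : 'M[C]_n) : Prop := adjmx A = A.

Definition psd n (A : 'M[C]_n) : Prop :=
  hermitian A /\ forall v : 'cV[C]_n, 0 <= (adjmx v *m A *m v) 0 0.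

Definition loewner_le n (A B : 'M[C]_n) : Prop := psd (B - A).

Definition is_state n (A : 'M[C]_n) : Prop := psd A /\ \tr A = 1.

(* trace norm ||X||_1 = tr sqrt(X^* X), where sqrt(X^* X) is the (unique)
   positive semidefinite square root of X^* X *)
Definition trace_norm n (X : 'M[C]_n) : R :=
  inf [set r : R | exists P : 'M[C]_n,
         [/\ psd P, P *m P = adjmx X *m X & (\tr P) = r%:C]].

Definition tdist n (A B : 'M[C]_n) : R := trace_norm (A - B).

Definition ball_eps n (eps : R) (rho : 'M[C]_n) : set 'M[C]_n :=
  [set tau | is_state tau /\ tdist tau rho <= eps].

Definition set_of_states n (F : set 'M[C]_n) : Prop :=
  forall s, F s -> is_state s.

Definition convex_set n (F : set 'M[C]_n) : Prop :=
  forall a b (t : R), F a -> F b -> 0 <= t <= 1 ->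
    F (t%:C *: a + (1 - t)%:C *: b).

(* smoothed gamma-factor (infimum in extended reals; +oo if no decomposition) *)
Definition gamma_eps n (F : set 'M[C]_n) (eps : R) (rho : 'M[C]_n) : \bar R :=
  ereal_inf [set x : \bar R | exists (c1 c2 : R) s1 s2 sigma,
     [/\ F s1 /\ F s2, 0 <= c1 /\ 0 <= c2,
          sigma = c1%:C *: s1 - c2%:C *: s2, ball_eps eps rho sigma
        & x = (c1 + c2)%:E]].

Definition Dmax n (tau : 'M[C]_n) (F : set 'M[C]_n) : \bar R :=
  ereal_inf [set ereal_inf [set lam%:E | lam in
                 [set lam : R | loewner_le tau ((2 `^ lam)%:C *: sigma)]]
            | sigma in F].

(* smoothed max-relative entropy (the min over the ball written as inf) *)
Definition Dmax_eps n (eps : R) (rho : 'M[C]_n) (F : set 'M[C]_n) : \bar R :=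
  ereal_inf [set Dmax tau F | tau in ball_eps eps rho].

Definition exp2e (x : \bar R) : \bar R :=
  match x with
  | r%:E => (2 `^ r)%:E
  | +oo%E => +oo%E
  | -oo%E => 0%E
  end.

End QDefs.

From HB Require Import structures.
From mathcomp Require Import all_boot all_order all_algebra.
From mathcomp.real_closed Require Import complex.
From mathcomp Require Import all_classical all_reals.
From mathcomp Require Import ereal exp.

Set Implicit Arguments.
Unset Strict Implicit.
Unset Printing Implicit Defensive.

Import Order.TTheory GRing.Theory Num.Theory.
Local Open Scope ring_scope.
Local Open Scope classical_set_scope.

(* Any admissible decomposition sigma = c1 sigma1 - c2 sigma2 of a state of
   the smoothing ball satisfies sigma <= c1 sigma1 with sigma1 in F, hence
   D_max(sigma || F) <= log2 c1.  Comparing traces of the three states gives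
   c1 = 1 + c2, so 2^(D^eps_max(rho || F)) <= c1 <= c1 + c2. *)

Section MaxRelativeEntropyBound.
Variable R : realType.
Local Notation C := (complex R).
Local Notation "x %:C" := (real_complex R x) (format "x %:C").

Lemma real_complex_ge0 (c : R) : 0 <= c -> 0 <= c%:C.
Proof. by move=> c_ge0; rewrite -(raddf0 (real_complex R)) lecR. Qed.

Lemma conjc_realM (c : R) (x : C) : conjc (c%:C * x) = c%:C * conjc x.
Proof. by rewrite rmorphM; congr (_ * _); exact: conjc_real. Qed.

Lemma psdZ n (c : R) (A : 'M[C]_n) : 0 <= c -> psd A -> psd (c%:C *: A).
Proof.
move=> c_ge0 [hermA posA]; split.
  apply/matrixP => i j; by rewrite /adjmx !mxE -[in RHS]hermA /adjmx !mxE conjc_realM.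
by move=> v; rewrite -scalemxAr -scalemxAl mxE mulr_ge0 ?real_complex_ge0.
Qed.

Lemma loewner_le_subr n (A B : 'M[C]_n) : psd B -> loewner_le (A - B) A.
Proof. by rewrite /loewner_le opprB addrC subrK. Qed.

Lemma state_decomp_coef n (sigma s1 s2 : 'M[C]_n) (c1 c2 : R) :
  is_state sigma -> is_state s1 -> is_state s2 ->
  sigma = c1%:C *: s1 - c2%:C *: s2 -> c1 = 1 + c2.
Proof.
move=> [_ tr_sigma] [_ tr1] [_ tr2] sigmaE.
have : (c1 - c2)%:C = 1%:C.
  by rewrite raddfB rmorph1 -tr_sigma sigmaE raddfB /= !mxtraceZ tr1 tr2 !mulr1.
by move/complexI/eqP; rewrite subr_eq addrC => /eqP.
Qed.

Lemma powR_logK (b x : R) : 1 < b -> 0 < x -> b `^ (ln x / ln b) = x.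
Proof.
move=> b_gt1 x_gt0; have ln_b_gt0 : 0 < ln b by rewrite ln_gt0.
by rewrite /powR gt_eqF ?(lt_trans ltr01) // mulfVK ?gt_eqF // lnK.
Qed.

Lemma Dmax_le_log2 n (tau s : 'M[C]_n) (F : set 'M[C]_n) (c : R) :
  F s -> 0 < c -> loewner_le tau (c%:C *: s) ->
  (Dmax tau F <= (ln c / ln 2)%:E)%E.
Proof.
move=> Fs c_gt0 tau_le.
apply: (@le_trans _ _ (ereal_inf [set lam%:E | lam in
    [set lam : R | loewner_le tau ((2 `^ lam)%:C *: s)]])).
  by apply: ereal_inf_lbound; exists s.
apply: ereal_inf_lbound; exists (ln c / ln 2) => [/=|//].
by rewrite powR_logK ?ltr1n.
Qed.

Lemma Dmax_eps_le_Dmax n (eps : R) (rho tau : 'M[C]_n) (F : set 'M[C]_n) :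
  ball_eps eps rho tau -> (Dmax_eps eps rho F <= Dmax tau F)%E.
Proof. by move=> ball_tau; apply: ereal_inf_lbound; exists tau. Qed.

Lemma exp2e_le (x : \bar R) (r : R) :
  (x <= r%:E)%E -> (exp2e x <= (2 `^ r)%:E)%E.
Proof.
case: x => [s||] //= s_le_r; rewrite lee_fin ?powR_ge0 //.
by rewrite ler_powR ?ler1n // -lee_fin.
Qed.

End MaxRelativeEntropyBound.

Theorem lemma5 (R : realType) (dA dB : nat)
  (rho : 'M[complex R]_(dA * dB)) (F : set 'M[complex R]_(dA * dB)) :
  is_state rho -> set_of_states F -> convex_set F ->
  forall eps : R, 0 < eps ->
  (exp2e (Dmax_eps eps rho F) <= gamma_eps F eps rho)%E.
Proof.
move=> _ statesF _ eps _; apply/ereal_infP => y [c1 [c2 [s1 [s2 [sigma]]]]].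
case=> -[F1 F2] [_ c2_ge0] sigmaE ball_sigma ->.
have c1E := state_decomp_coef (proj1 ball_sigma) (statesF _ F1) (statesF _ F2) sigmaE.
have c1_gt0 : 0 < c1 by rewrite c1E ltr_pwDl.
have sigma_le : loewner_le sigma (real_complex R c1 *: s1).
  by rewrite sigmaE; apply/loewner_le_subr/psdZ => //; case: (statesF _ F2).
apply: le_trans (exp2e_le (le_trans (Dmax_eps_le_Dmax F ball_sigma)
                                    (Dmax_le_log2 F1 c1_gt0 sigma_le))) _.
by rewrite powR_logK ?ltr1n // lee_fin lerDl.
Qed.
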